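(* Let $(X,\le,S)$ be a finite $S$-poset. The finite nuclear implicative semilattice dual to $(X,\le,S)$ is projective if and only if every antichain $\alpha\subseteq X$ with $\alpha\not\subseteq S$ has a cover.
   Context: A nuclear implicative semilattice is an algebra $(A,\top,\wedge,\to,\ell)$ where $(A,\top,\wedge,\to)$ is an implicative semilattice (the $\{\top,\wedge,\to\}$-subreducts of Heyting algebras) and $\ell$ is a nucleus: $x\le\ell x$, $\ell(x\wedge y)=\ell x\wedge\ell y$, $\ell\ell x\le\ell x$. They form a locally finite variety. An $S$-poset is a triple $(X,\le,S)$ with $(X,\le)$ a poset and $S\subseteq X$. A morphism $f:(X,\le,S)\to(Y,\le,T)$ is a partial map with domain $dom(f)$ such that: (i) if $x<y$ and $x,y\in dom(f)$ then $f(x)<f(y)$; (ii) if $x\in dom(f)$ and $f(x)<y$ then there is $x'\in dom(f)$ with $x<x'$ and $f(x')=y$; (iii) $f^{-1}(T)=dom(f)\cap S$; (iv) if $s\in S$, $s\le x$, $x\in dom(f)$, then there are $s',x'\in dom(f)$ with $s\le s'\le x'$, $s'\in S$ and $f(x')=f(x)$. The category of finite nuclear implicative semilattices is dually equivalent to the category of finite $S$-posets with these morphisms (a known duality, used as given); under it, a homomorphism is injective iff its dual morphism is surjective, and surjective iff its dual is injective and totally defined. An algebra $P$ is projective if for every surjective homomorphism $e:\mathcal B\to\mathcal C$ and homomorphism $g:P\to\mathcal C$ there is $h$ with $e\circ h=g$ (for finite algebras in a locally finite variety it suffices to consider finite $\mathcal B,\mathcal C$). An antichain is a set of pairwise $\le$-incomparable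 elements; a cover of an antichain $\alpha$ is an element $s\in S$ whose set of immediate successors is exactly $\alpha$. *)

From mathcomp Require Import all_boot.
Set Implicit Arguments. Unset Strict Implicit. Unset Printing Implicit Defensive.

Record nis_ops := NisOps {
  car :> finType;
  ntop : car;
  nmeet : car -> car -> car;
  nimp : car -> car -> car;
  nnuc : car -> car }.

Definition nle (A : nis_ops) (x y : A) : Prop := nmeet x y = x.

Definition is_nis (A : nis_ops) : Prop :=
  (forall x y z : A, nmeet x (nmeet y z) = nmeet (nmeet x y) z) /\
  (forall x y : A, nmeet x y = nmeet y x) /\
  (forall x : A, nmeet x x = x) /\
  (forall x : A, nmeet x (ntop A) = x) /\
  (forall x y z : A, nle (nmeet x y) z <-> nle x (nimp y z)) /\
  (forall x : A, nle x (nnuc x)) /\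
  (forall x y : A, nnuc (nmeet x y) = nmeet (nnuc x) (nnuc y)) /\
  (forall x : A, nle (nnuc (nnuc x)) (nnuc x)).

Definition is_hom (A B : nis_ops) (f : A -> B) : Prop :=
  [/\ f (ntop A) = ntop B,
      (forall x y, f (nmeet x y) = nmeet (f x) (f y)),
      (forall x y, f (nimp x y) = nimp (f x) (f y))
    & (forall x, f (nnuc x) = nnuc (f x))].

(* Projectivity of a finite algebra P; by local finiteness of the variety it
   suffices (as stated in the paper) to test against finite B, C. *)
Definition projective (P : nis_ops) : Prop :=
  forall (B C : nis_ops), is_nis B -> is_nis C ->
  forall (e : B -> C) (g : P -> C),
    is_hom e -> (forall c : C, exists b : B, e b = c) -> is_hom g ->
    exists h : P -> B, is_hom h /\ (forall p : P, e (h p) = g p).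

Record SPoset := MkSPoset {
  pt :> finType;
  ple : rel pt;
  ple_refl : forall x, ple x x;
  ple_anti : forall x y, ple x y -> ple y x -> x = y;
  ple_trans : forall x y z, ple x y -> ple y z -> ple x z;
  pS : {set pt} }.

Section Dual.
Variable P : SPoset.

Definition is_upset (U : {set P}) : bool :=
  [forall x, forall y, ((x \in U) && ple x y) ==> (y \in U)].

Definition upsets := {U : {set P} | is_upset U}.

Lemma upsetP (U : {set P}) :
  reflect (forall x y, x \in U -> ple x y -> y \in U) (is_upset U).
Proof.
apply: (iffP forallP) => [H x y xU lxy | H x].
  by move: (H x) => /forallP /(_ y) /implyP; apply; rewrite xU.
by apply/forallP => y; apply/implyP => /andP [] /H; apply.
Qed.

Lemma upset_setT : is_upset setT.
Proof. by apply/upsetP => x y; rewrite !inE. Qed.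

Lemma upset_setI (U V : {set P}) : is_upset U -> is_upset V -> is_upset (U :&: V).
Proof.
move=> /upsetP hU /upsetP hV; apply/upsetP => x y; rewrite !inE => /andP [xU xV] lxy.
by rewrite (hU x y) // (hV x y).
Qed.

Definition imp_set (U V : {set P}) : {set P} :=
  [set x | [forall y, ple x y ==> (y \in U) ==> (y \in V)]].

Lemma upset_imp U V : is_upset (imp_set U V).
Proof.
apply/upsetP => x y; rewrite !inE => /forallP H lxy; apply/forallP => z.
apply/implyP => lyz; apply: (implyP (H z)); exact: ple_trans lxy lyz.
Qed.

Definition nuc_set (U : {set P}) : {set P} :=
  [set x | [forall s in pS P, ple x s ==> (s \in U)]].

Lemma upset_nuc U : is_upset (nuc_set U).
Proof.
apply/upsetP => x y; rewrite !inE => /forallP H lxy; apply/forallP => s.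
apply/implyP => sS; apply/implyP => lys.
move: (H s); rewrite sS /= => /implyP; apply; exact: ple_trans lxy lys.
Qed.

Definition dual_ops : nis_ops :=
  @NisOps upsets
    (exist _ setT upset_setT)
    (fun U V => exist _ (val U :&: val V) (upset_setI (valP U) (valP V)))
    (fun U V => exist _ (imp_set (val U) (val V)) (upset_imp (val U) (val V)))
    (fun U => exist _ (nuc_set (val U)) (upset_nuc (val U))).

End Dual.

Definition plt (P : SPoset) (x y : P) : bool := (x != y) && ple x y.

Definition antichain (P : SPoset) (a : {set P}) : Prop :=
  forall x y, x \in a -> y \in a -> ple x y -> x = y.

Definition imm_succ (P : SPoset) (x : P) : {set P} :=
  [set y | plt x y && ~~ [exists z, plt x z && plt z y]].

Definition has_cover (P : SPoset) (a : {set P}) : Prop :=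
  exists s, s \in pS P /\ imm_succ s = a.

From mathcomp Require Import all_boot.
Set Implicit Arguments. Unset Strict Implicit. Unset Printing Implicit Defensive.

(** A finite nuclear implicative semilattice D is isomorphic to the dual of its
  spectrum: the meet-irreducible elements of D, ordered reversely, with the
  fixpoints of the nucleus as distinguished subset.  Pulling back along an
  arbitrary homomorphism, the dual A of X is projective as soon as every
  surjection e : D -> A has a homomorphic section.  Dually, e embeds X into the
  spectrum Y of D, and a section is a partial morphism Y -> X extending the
  inverse of this embedding.  When every antichain leaving S has a cover, such
  a partial map is built top-down, one point p at a time: if p is in S and the
  minimal values taken above p form an antichain leaving S, p is sent to a
  cover of that antichain, otherwise it stays outside the domain.
  Conversely, given an antichain a leaving S, adjoin to X a new point of S
  lying below exactly the up-set of a.  Restriction to X is a surjection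
  between the duals.  For a section of it, the least up-set of X whose image
  contains the new point has a least element, and this element covers a. *)

Lemma ex_maximal (T : finType) (r : rel T) (P : pred T) (x0 : T) :
  (forall x y z, r x y -> r y z -> r x z) -> P x0 ->
  exists2 x, P x & forall y, P y -> r x y -> r y x.
Proof.
move=> r_trans Px0.
pose above x := [set y | r x y && ~~ r y x].
have [x Px xmin] := @arg_minnP _ x0 P (fun i => #|above i|) Px0.
exists x => // y Py rxy; apply/negPn/negP => nryx.
have : #|above y| < #|above x|.
  apply: proper_card; apply/properP; split.
    apply/subsetP => z; rewrite !inE => /andP [ryz nrzy].
    rewrite (r_trans _ _ _ rxy ryz) /=.
    by apply: contra nrzy => rzx; apply: r_trans rzx rxy.
  by exists y; rewrite !inE ?rxy //; case: (r y y).
by rewrite ltnNge xmin.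
Qed.

Lemma ex_minimal (T : finType) (r : rel T) (P : pred T) (x0 : T) :
  (forall x y z, r x y -> r y z -> r x z) -> P x0 ->
  exists2 x, P x & forall y, P y -> r y x -> r x y.
Proof.
move=> r_trans; apply: (@ex_maximal T (fun x y => r y x)).
by move=> x y z yx zy; apply: r_trans zy yx.
Qed.

Existing Class is_nis.

Section NisTheory.
Context {A : nis_ops} {HA : is_nis A}.

Definition nleb (x y : A) : bool := nmeet x y == x.
Lemma nlebP x y : reflect (nle x y) (nleb x y).
Proof. exact: eqP. Qed.

Lemma nmeetA (x y z : A) : nmeet x (nmeet y z) = nmeet (nmeet x y) z.
Proof. by case: HA. Qed.
Lemma nmeetC (x y : A) : nmeet x y = nmeet y x.
Proof. by case: HA => _ []. Qed.
Lemma nmeetxx (x : A) : nmeet x x = x.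
Proof. by case: HA => _ [] _ []. Qed.
Lemma nmeetxT (x : A) : nmeet x (ntop A) = x.
Proof. by case: HA => _ [] _ [] _ []. Qed.
Lemma nle_impP (x y z : A) : nle (nmeet x y) z <-> nle x (nimp y z).
Proof. by case: HA => _ [] _ [] _ [] _ []. Qed.
Lemma nle_nuc (x : A) : nle x (nnuc x).
Proof. by case: HA => _ [] _ [] _ [] _ [] _ []. Qed.
Lemma nnucI (x y : A) : nnuc (nmeet x y) = nmeet (nnuc x) (nnuc y).
Proof. by case: HA => _ [] _ [] _ [] _ [] _ [] _ []. Qed.
Lemma nle_nnuc_idem (x : A) : nle (nnuc (nnuc x)) (nnuc x).
Proof. by case: HA => _ [] _ [] _ [] _ [] _ [] _ []. Qed.

Lemma nle_refl (x : A) : nle x x.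
Proof. exact: nmeetxx. Qed.
Lemma nle_trans (x y z : A) : nle x y -> nle y z -> nle x z.
Proof. by rewrite /nle => xy yz; rewrite -xy -nmeetA yz. Qed.
Lemma nle_anti (x y : A) : nle x y -> nle y x -> x = y.
Proof. by rewrite /nle => xy yx; rewrite -xy nmeetC yx. Qed.
Lemma nle_top (x : A) : nle x (ntop A).
Proof. exact: nmeetxT. Qed.
Lemma nle_meetl (x y : A) : nle (nmeet x y) x.
Proof. by rewrite /nle nmeetC nmeetA nmeetxx. Qed.
Lemma nle_meetr (x y : A) : nle (nmeet x y) y.
Proof. by rewrite /nle -nmeetA nmeetxx. Qed.
Lemma nle_meet (x y z : A) : nle z x -> nle z y -> nle z (nmeet x y).
Proof. by rewrite /nle => zx zy; rewrite nmeetA zx zy. Qed.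
Lemma top_nle (x : A) : nle (ntop A) x -> x = ntop A.
Proof. by move=> h; apply: nle_anti (nle_top _) h. Qed.
Lemma nle_meet_imp (x y : A) : nle (nmeet x (nimp x y)) y.
Proof. by rewrite nmeetC; apply/nle_impP/nle_refl. Qed.
Lemma nle_imp (x y : A) : nle y (nimp x y).
Proof. exact/nle_impP/nle_meetl. Qed.
Lemma nle_nuc_mono (x y : A) : nle x y -> nle (nnuc x) (nnuc y).
Proof. by rewrite /nle => xy; rewrite -nnucI xy. Qed.
Lemma nnuc_idem (x : A) : nnuc (nnuc x) = nnuc x.
Proof. exact: nle_anti (nle_nnuc_idem x) (nle_nuc _). Qed.

Lemma nleb_trans (x y z : A) : nleb x y -> nleb y z -> nleb x z.
Proof. by move=> /nlebP xy /nlebP yz; apply/nlebP; apply: nle_trans xy yz. Qed.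

Definition meet_irr (m : A) : bool :=
  (m != ntop A) && [forall x, forall y, (nmeet x y == m) ==> (x == m) || (y == m)].

Lemma meet_irrP (m : A) :
  meet_irr m -> m <> ntop A /\ forall x y, nmeet x y = m -> x = m \/ y = m.
Proof.
case/andP => /eqP m_ntop /forallP irr; split => // x y xym.
by move/forallP/(_ y): (irr x); rewrite xym eqxx /= => /orP [] /eqP; [left | right].
Qed.

Lemma meet_irr_ntop (m : A) : meet_irr m -> ~ nle (ntop A) m.
Proof. by case/meet_irrP => m_ntop _ /top_nle. Qed.

(* In an implicative semilattice meet-irreducibles are prime: [m] is the meet of
   [x -> m] and [(x -> m) -> m], and the second one lies above [x]. *)
Lemma meet_irr_prime (m x y : A) : meet_irr m -> nle (nmeet x y) m -> nle x m \/ nle y m.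
Proof.
move=> /meet_irrP [_ irr] xym.
have e : nmeet (nimp x m) (nimp (nimp x m) m) = m.
  by apply: nle_anti (nle_meet_imp _ _) _; apply: nle_meet; apply: nle_imp.
case: (irr _ _ e) => [xm | xmm].
  by right; rewrite -xm; apply/nle_impP; rewrite nmeetC.
by left; rewrite -xmm; apply/nle_impP; apply: nle_meet_imp.
Qed.

Definition bigmeet (s : seq A) : A := foldr (@nmeet A) (ntop A) s.

Lemma bigmeet_nle (s : seq A) x : x \in s -> nle (bigmeet s) x.
Proof.
elim: s => // a s IH; rewrite inE /= => /orP [/eqP -> | xs]; first exact: nle_meetl.
exact: nle_trans (nle_meetr _ _) (IH xs).
Qed.

Lemma bigmeet_prime (s : seq A) m :
  meet_irr m -> nle (bigmeet s) m -> exists2 x, x \in s & nle x m.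
Proof.
move=> mirr; elim: s => [|a s IH] /=; first by move/(meet_irr_ntop mirr).
case/(meet_irr_prime mirr) => [am | /IH [x xs xm]].
  by exists a; rewrite ?inE ?eqxx.
by exists x; rewrite // inE xs orbT.
Qed.

Lemma meet_irr_maximal (m : A) (good : pred A) :
  good (ntop A) -> (forall x y, good x -> good y -> good (nmeet x y)) ->
  ~~ good m -> (forall w, nle m w -> ~~ good w -> w = m) -> meet_irr m.
Proof.
move=> goodT goodI m_bad m_max; apply/andP; split.
  by apply: contraNneq m_bad => ->.
apply/forallP => x; apply/forallP => y; apply/implyP => /eqP xym.
have [gx | bx] := boolP (good x); last first.
  by rewrite (m_max x _ bx) ?eqxx // -xym; apply: nle_meetl.
have [gy | b_y] := boolP (good y); last first.
  by rewrite (m_max y _ b_y) ?eqxx ?orbT // -xym; apply: nle_meetr.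
by move: m_bad; rewrite -xym goodI.
Qed.

Lemma meet_irr_separation (b c : A) :
  ~ nle b c -> exists m, [/\ meet_irr m, nle c m & ~ nle b m].
Proof.
move=> nbc; pose sep w := nleb c w && ~~ nleb b w.
have c_sep : sep c by rewrite /sep (introT (nlebP _ _) (nle_refl c)); apply/negP => /nlebP.
have [m /andP [/nlebP cm /negP bm] mmax] := @ex_maximal A nleb sep c nleb_trans c_sep.
exists m; split => //; last by move/nlebP.
apply: (@meet_irr_maximal m (nleb b)); last 2 first.
- exact/negP.
- move=> w mw bw; apply: (nle_anti _ mw); apply/nlebP; apply: mmax; last exact/nlebP.
  by rewrite /sep bw (introT (nlebP _ _) (nle_trans cm mw)).
- exact/nlebP/nle_top.
- by move=> x y /nlebP bx /nlebP b_y; apply/nlebP/nle_meet.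
Qed.

Lemma meet_irr_nuc_fixed (x m : A) : meet_irr m -> nle (nnuc x) m ->
  exists s, [/\ meet_irr s, nnuc s = s, nle x s & nle s m].
Proof.
move=> mirr xm.
pose between w := (nnuc w == w) && nleb x w && nleb w m.
have nx_between : between (nnuc x).
  by rewrite /between nnuc_idem eqxx; apply/andP; split; apply/nlebP => //; apply: nle_nuc.
have [s /andP [/andP [/eqP s_fix /nlebP xs] /nlebP sm] smax] :=
  @ex_maximal A nleb between _ nleb_trans nx_between.
exists s; split => //.
apply: (@meet_irr_maximal s (fun w => ~~ nleb (nnuc w) m)).
- rewrite (top_nle (nle_nuc _)); apply/negP => /nlebP.
  exact: meet_irr_ntop mirr.
- move=> u v /negP um /negP vm; apply/negP => /nlebP; rewrite nnucI.
  by case/(meet_irr_prime mirr) => /nlebP.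
- by rewrite s_fix negbK; apply/nlebP.
- move=> w sw /negPn /nlebP wm; apply: (nle_anti _ sw); apply: nle_trans (nle_nuc w) _.
  have s_nw : nle s (nnuc w) := nle_trans sw (nle_nuc w).
  apply/nlebP; apply: smax; last exact/nlebP.
  rewrite /between nnuc_idem eqxx; apply/andP; split; apply/nlebP => //.
  exact: nle_trans xs s_nw.
Qed.

End NisTheory.

Lemma hom_nle (A B : nis_ops) (f : A -> B) x y : is_hom f -> nle x y -> nle (f x) (f y).
Proof. by case=> _ fI _ _; rewrite /nle => xy; rewrite -fI xy. Qed.

Lemma hom_id (A : nis_ops) : is_hom (@id A).
Proof. by []. Qed.

Lemma hom_comp (A B C : nis_ops) (f : A -> B) (g : B -> C) :
  is_hom f -> is_hom g -> is_hom (fun x => g (f x)).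
Proof.
move=> [fT fI fimp fnuc] [gT gI gimp gnuc]; split.
- by rewrite fT gT.
- by move=> x y; rewrite fI gI.
- by move=> x y; rewrite fimp gimp.
- by move=> x; rewrite fnuc gnuc.
Qed.

Lemma hom_inv (A B : nis_ops) (f : A -> B) (g : B -> A) :
  is_hom f -> injective f -> cancel g f -> is_hom g.
Proof.
move=> [fT fI fimp fnuc] f_inj gK; split.
- by apply: f_inj; rewrite gK fT.
- by move=> x y; apply: f_inj; rewrite fI !gK.
- by move=> x y; apply: f_inj; rewrite fimp !gK.
- by move=> x; apply: f_inj; rewrite fnuc !gK.
Qed.

Section DualNis.
Variable X : SPoset.

Lemma upsetW (U : dual_ops X) x y : x \in val U -> ple x y -> y \in val U.
Proof. by move: (valP U) => /upsetP; apply. Qed.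

Lemma in_impP (U V : {set X}) x :
  reflect (forall y, ple x y -> y \in U -> y \in V) (x \in imp_set U V).
Proof.
rewrite inE; apply: (iffP forallP) => H y.
  by move=> xy yU; move: (H y); rewrite xy yU.
by apply/implyP => xy; apply/implyP; apply: H.
Qed.

Lemma in_nucP (U : {set X}) x :
  reflect (forall s, s \in pS X -> ple x s -> s \in U) (x \in nuc_set U).
Proof.
rewrite inE; apply: (iffP forallP) => H s.
  by move=> sS xs; move: (H s); rewrite sS xs.
by apply/implyP => sS; apply/implyP; apply: H.
Qed.

Lemma dual_nle (U V : dual_ops X) : nle U V <-> val U \subset val V.
Proof.
rewrite /nle; split; first by move=> <- /=; apply: subsetIr.
by move=> UV; apply: val_inj => /=; apply/setIidPl.
Qed.

Lemma imp_set_subT (U V : {set X}) : U \subset V -> imp_set U V = setT.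
Proof.
move=> UV; apply/setP => x; rewrite [in RHS]inE; apply/in_impP => y _.
exact: (subsetP UV).
Qed.

Lemma imp_setT (U : {set X}) : is_upset U -> imp_set setT U = U.
Proof.
move=> /upsetP U_up; apply/setP => x; apply/in_impP/idP => [H | xU y xy _].
  by apply: H (ple_refl _) _; rewrite inE.
exact: U_up xU xy.
Qed.

Lemma upset_above (x : X) : is_upset [set y | ple x y].
Proof. by apply/upsetP => a b; rewrite !inE => xa ab; apply: ple_trans xa ab. Qed.

Lemma upset_not_below (x : X) : is_upset [set y | ~~ ple y x].
Proof.
apply/upsetP => a b; rewrite !inE => ax ab; apply: contra ax => bx.
exact: ple_trans ab bx.
Qed.

#[export] Instance dual_is_nis : is_nis (dual_ops X).
Proof.
split; first by move=> U V W; apply: val_inj => /=; rewrite setIA.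
split; first by move=> U V; apply: val_inj => /=; rewrite setIC.
split; first by move=> U; apply: val_inj => /=; rewrite setIid.
split; first by move=> U; apply: val_inj => /=; rewrite setIT.
split.
  move=> U V W; split => /dual_nle /= h; apply/dual_nle => /=; apply/subsetP.
    move=> x xU; apply/in_impP => y xy yV.
    by apply: (subsetP h); rewrite inE yV (upsetW xU xy).
  move=> x; rewrite inE => /andP [xU xV].
  by move/subsetP: h => /(_ x xU) /in_impP; apply => //; apply: ple_refl.
split.
  move=> U; apply/dual_nle/subsetP => x xU /=; apply/in_nucP => s _ xs.
  exact: upsetW xU xs.
split.
  move=> U V; apply: val_inj => /=; apply/setP => x; rewrite [in RHS]inE.
  apply/in_nucP/andP => [H | [/in_nucP HU /in_nucP HV]].
    by split; apply/in_nucP => s sS xs; move: (H s sS xs); rewrite inE => /andP [].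
  by move=> s sS xs; rewrite inE HU ?HV.
move=> U; apply/dual_nle/subsetP => x /= /in_nucP H; apply/in_nucP => s sS xs.
by move: (H s sS xs) => /in_nucP; apply => //; apply: ple_refl.
Qed.

End DualNis.

Section Spectrum.
Context {D : nis_ops} {HD : is_nis D}.

Definition spec_pt := {m : D | meet_irr m}.

Definition spec_le (p q : spec_pt) : bool := nleb (val q) (val p).

Lemma spec_le_refl p : spec_le p p.
Proof. exact/nlebP/nle_refl. Qed.
Lemma spec_le_anti p q : spec_le p q -> spec_le q p -> p = q.
Proof. by move=> /nlebP qp /nlebP pq; apply: val_inj; apply: nle_anti. Qed.
Lemma spec_le_trans p q r : spec_le p q -> spec_le q r -> spec_le p r.
Proof. by move=> pq qr; apply: nleb_trans qr pq. Qed.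

Definition spectrum : SPoset :=
  @MkSPoset spec_pt spec_le spec_le_refl spec_le_anti spec_le_trans
    [set p : spec_pt | nnuc (val p) == val p].

Definition rep_set (b : D) : {set spectrum} := [set p : spectrum | ~~ nleb b (val p)].

Lemma in_rep_set b (p : spectrum) : (p \in rep_set b) = ~~ nleb b (val p).
Proof. by rewrite inE. Qed.

Lemma rep_set_upset b : is_upset (rep_set b).
Proof.
apply/upsetP => p q; rewrite !in_rep_set => bp qp; apply: contra bp => bq.
exact: nleb_trans bq qp.
Qed.

Definition rep (b : D) : dual_ops spectrum := exist _ (rep_set b) (rep_set_upset b).

(* The least element of [D] not below [p]; it exists since [p] is prime. *)
Definition least_nle (p : spectrum) : D := bigmeet [seq b <- enum D | ~~ nleb b (val p)].

Lemma least_nle_not_le p : ~ nle (least_nle p) (val p).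
Proof.
by move=> /(bigmeet_prime (valP p)) [b]; rewrite mem_filter => /andP [/negP bp _] /nlebP.
Qed.

Lemma least_nle_le p b : ~ nle b (val p) -> nle (least_nle p) b.
Proof.
by move=> bp; apply: bigmeet_nle; rewrite mem_filter mem_enum andbT; apply/negP => /nlebP.
Qed.

Lemma rep_top : rep (ntop D) = ntop (dual_ops spectrum).
Proof.
apply: val_inj; apply/setP => p /=; rewrite in_rep_set inE.
by apply/negP => /nlebP; apply: meet_irr_ntop (valP p).
Qed.

Lemma rep_meet x y : rep (nmeet x y) = nmeet (rep x) (rep y).
Proof.
apply: val_inj; apply/setP => p /=; rewrite !inE; apply/idP/idP.
  move=> xyp; apply/andP; split; apply: contra xyp => /nlebP h; apply/nlebP.
    exact: nle_trans (nle_meetl _ _) h.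
  exact: nle_trans (nle_meetr _ _) h.
case/andP => /negP xp /negP yp; apply/negP => /nlebP xyp.
by case: (meet_irr_prime (valP p) xyp) => /nlebP.
Qed.

Lemma rep_imp x y : rep (nimp x y) = nimp (rep x) (rep y).
Proof.
apply: val_inj; apply/setP => p /=; rewrite in_rep_set.
apply/idP/(@in_impP spectrum (rep_set x) (rep_set y) p).
  move=> /negP xyp q pq; rewrite !in_rep_set => /negP xq; apply/negP => /nlebP yq.
  case: (meet_irr_prime (valP q) (nle_trans (nle_meet_imp x y) yq)) => /nlebP // xyq.
  by apply: xyp; apply: nleb_trans xyq pq.
move=> H; apply/negP => /nlebP xyp.
have lx_y : ~ nle (nmeet (least_nle p) x) y.
  by move=> /nle_impP h; apply: (@least_nle_not_le p); apply: nle_trans h xyp.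
have [m [mirr ym lxm]] := meet_irr_separation lx_y.
pose q : spectrum := exist _ m mirr.
have pq : ple p q.
  rewrite /= /spec_le /=; have [// | mp] := nlebP m (val p).
  by case: lxm; apply: nle_trans (nle_meetl _ _) (least_nle_le mp).
have xq : q \in rep_set x.
  by rewrite in_rep_set; apply/negP => /nlebP h; apply: lxm; apply: nle_trans (nle_meetr _ _) h.
by move: (H q pq xq); rewrite in_rep_set => /negP; apply; apply/nlebP.
Qed.

Lemma rep_nuc x : rep (nnuc x) = nnuc (rep x).
Proof.
apply: val_inj; apply/setP => p /=; rewrite in_rep_set.
apply/idP/(@in_nucP spectrum (rep_set x) p).
  move=> /negP nxp s; rewrite inE => /eqP s_fix ps; rewrite in_rep_set.
  apply/negP => /nlebP xs; apply: nxp; apply/nlebP.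
  by apply: nle_trans (nle_nuc_mono xs) _; rewrite s_fix; apply/nlebP.
move=> H; apply/negP => /nlebP nxp.
have [s [sirr s_fix xs sp]] := meet_irr_nuc_fixed (valP p) nxp.
have : (exist _ s sirr : spectrum) \in rep_set x.
  by apply: H; [rewrite inE /= s_fix | apply/nlebP].
by rewrite in_rep_set => /negP; apply; apply/nlebP.
Qed.

Lemma rep_hom : is_hom rep.
Proof. by split; [apply: rep_top | apply: rep_meet | apply: rep_imp | apply: rep_nuc]. Qed.

Lemma rep_inj : injective rep.
Proof.
suff rep_nle b c : rep b = rep c -> nle b c.
  by move=> b c bc; apply: nle_anti; apply: rep_nle.
move=> bc; have [// | nbc] := nlebP b c.
have [m [mirr cm bm]] := meet_irr_separation nbc.
have : (exist _ m mirr : spectrum) \in rep_set b by rewrite in_rep_set; apply/negP => /nlebP.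
by rewrite [rep_set b](congr1 val bc) in_rep_set => /negP; case; apply/nlebP.
Qed.

Definition rep_inv (U : dual_ops spectrum) : D := bigmeet [seq val q | q <- enum (~: val U)].

Lemma rep_invK : cancel rep_inv rep.
Proof.
move=> U; apply: val_inj; apply/setP => p /=; rewrite in_rep_set.
have [pU | pU] := boolP (p \in val U).
  apply/negP => /nlebP /(bigmeet_prime (valP p)) [b /mapP [q]].
  rewrite mem_enum inE => qU -> qp.
  by move: qU; rewrite (upsetW pU (introT (nlebP _ _) qp)).
suff /nlebP -> : nle (rep_inv U) (val p) by [].
by apply: bigmeet_nle; apply/mapP; exists p; rewrite ?mem_enum ?inE.
Qed.

Lemma rep_inv_hom : is_hom rep_inv.
Proof. exact: hom_inv rep_hom rep_inj rep_invK. Qed.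

End Spectrum.

Section PartialMapDual.
Variables (X Y : SPoset) (f : Y -> option X).

(* The action of the duality on the partial map [f]. *)
Definition pmap_set (U : {set X}) : {set Y} :=
  [set p | [forall q, ple p q ==> (if f q is Some x then x \in U else true)]].

Lemma pmap_setP (U : {set X}) p :
  reflect (forall q x, ple p q -> f q = Some x -> x \in U) (p \in pmap_set U).
Proof.
rewrite inE; apply: (iffP forallP) => H.
  by move=> q x pq fq; move: (H q); rewrite pq fq.
by move=> q; apply/implyP => pq; case fq: (f q) => [x|] //; apply: H fq.
Qed.

Lemma pmap_set_upset (U : {set X}) : is_upset (pmap_set U).
Proof.
apply/upsetP => p q /pmap_setP H pq; apply/pmap_setP => r x qr fr.
exact: H (ple_trans pq qr) fr.
Qed.

Definition pmap_dual (U : dual_ops X) : dual_ops Y :=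
  exist _ (pmap_set (val U)) (pmap_set_upset (val U)).

(* Conditions (i)-(iv) on the partial map [f], with (i) weakened to
   monotonicity. *)
Hypothesis f_mono : forall p q x y, ple p q -> f p = Some x -> f q = Some y -> ple x y.
Hypothesis f_up : forall p x y, f p = Some x -> ple x y -> exists2 q, ple p q & f q = Some y.
Hypothesis f_S : forall p x, f p = Some x -> (x \in pS X) = (p \in pS Y).
Hypothesis f_S_below : forall s x y, s \in pS Y -> ple s x -> f x = Some y ->
  exists s', exists x', [/\ s' \in pS Y, ple s s', ple s' x', f s' != None & f x' = Some y].

Lemma pmap_dual_imp U V : pmap_dual (nimp U V) = nimp (pmap_dual U) (pmap_dual V).
Proof.
apply: val_inj; apply/setP => p /=.
apply/pmap_setP/(@in_impP Y (pmap_set (val U)) (pmap_set (val V)) p) => [H | H].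
  move=> q pq /pmap_setP qU; apply/pmap_setP => r x qr fr.
  have /(@in_impP X) := H r x (ple_trans pq qr) fr; apply; first exact: ple_refl.
  exact: qU qr fr.
move=> q x pq fq; apply/(@in_impP X) => w xw wU.
have [q' qq' fq'] := f_up fq xw.
have q'U : q' \in pmap_set (val U).
  by apply/pmap_setP => r z q'r fr; apply: upsetW wU (f_mono q'r fq' fr).
by move/pmap_setP: (H q' (ple_trans pq qq') q'U); apply; [apply: ple_refl | apply: fq'].
Qed.

Lemma pmap_dual_nuc U : pmap_dual (nnuc U) = nnuc (pmap_dual U).
Proof.
apply: val_inj; apply/setP => p /=.
apply/pmap_setP/(@in_nucP Y (pmap_set (val U)) p) => [H | H].
  move=> t tS pt; apply/pmap_setP => r x tr fr.
  have [s' [x'] [s'S ts' s'x' fs' fx']] := f_S_below tS tr fr.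
  case fs'E: (f s') fs' => [y|] // _.
  have yS : y \in pS X by rewrite (f_S fs'E).
  have /(@in_nucP X) /(_ y yS (ple_refl _)) yU := H s' y (ple_trans pt ts') fs'E.
  exact: upsetW yU (f_mono s'x' fs'E fx').
move=> q x pq fq; apply/(@in_nucP X) => s sS xs.
have [q' qq' fq'] := f_up fq xs.
have q'S : q' \in pS Y by rewrite -(f_S fq').
by move/pmap_setP: (H q' q'S (ple_trans pq qq')); apply; [apply: ple_refl | apply: fq'].
Qed.

Lemma pmap_dual_hom : is_hom pmap_dual.
Proof.
split; [| | exact: pmap_dual_imp | exact: pmap_dual_nuc].
- by apply: val_inj; apply/setP => p /=; rewrite [in RHS]inE; apply/pmap_setP => q x.
- move=> U V; apply: val_inj; apply/setP => p /=; rewrite [in RHS]inE.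
  apply/pmap_setP/andP => [H | [/pmap_setP HU /pmap_setP HV]].
    by split; apply/pmap_setP => q x pq fq; move: (H q x pq fq); rewrite inE => /andP [].
  by move=> q x pq fq; rewrite inE (HU q x pq fq) (HV q x pq fq).
Qed.

End PartialMapDual.

Section FinitePoset.
Variable X : SPoset.

Definition minset (A : {set X}) : {set X} :=
  [set a in A | [forall t in A, ple t a ==> (t == a)]].

Lemma minset_sub (A : {set X}) : minset A \subset A.
Proof. by apply/subsetP => a; rewrite inE => /andP []. Qed.

Lemma minset_antichain (A : {set X}) : antichain (minset A).
Proof.
move=> x y; rewrite !inE => /andP [xA _] /andP [yA /forallP ymin] xy.
by move: (ymin x); rewrite xA xy => /eqP.
Qed.

Lemma minset_below (A : {set X}) t : t \in A -> exists2 a, a \in minset A & ple a t.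
Proof.
move=> tA.
have [|a /andP [aA at_] amin] :=
  @ex_minimal X (@ple X) (fun a => (a \in A) && ple a t) t (@ple_trans X).
  by rewrite tA ple_refl.
exists a => //; rewrite inE aA; apply/forallP => u; apply/implyP => uA; apply/implyP => ua.
by apply/eqP; apply: (ple_anti ua (amin u _ ua)); rewrite uA (ple_trans ua at_).
Qed.

Lemma imm_succ_plt (c a : X) : a \in imm_succ c -> plt c a.
Proof. by rewrite inE => /andP []. Qed.

Lemma imm_succ_below (c y : X) : plt c y -> exists2 a, a \in imm_succ c & ple a y.
Proof.
move=> cy.
have [|a /andP [ca ay] amin] :=
  @ex_minimal X (@ple X) (fun a => plt c a && ple a y) y (@ple_trans X).
  by rewrite cy ple_refl.
exists a => //; rewrite inE ca; apply/existsPn => z; apply/andP => -[cz /andP [za za']].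
have := amin z; rewrite cz (ple_trans za' ay) => /(_ isT za') az.
by move: za; rewrite (ple_anti za' az) eqxx.
Qed.

End FinitePoset.

Section SurjectionSection.
Context {D : nis_ops} {HD : is_nis D}.
Variables (X : SPoset) (e : D -> dual_ops X).
Hypothesis e_hom : is_hom e.
Hypothesis e_surj : forall U, exists b, e b = U.
Hypothesis cover :
  forall a : {set X}, antichain a -> ~~ (a \subset pS X) -> has_cover a.

Local Notation Y := (@spectrum D HD).
Local Notation E b := (val (e b)).

Lemma E_nle b c : nle b c -> E b \subset E c.
Proof. by move=> bc; apply/dual_nle; apply: hom_nle. Qed.
Lemma E_top : E (ntop D) = setT.
Proof. by case: e_hom => -> _ _ _. Qed.
Lemma E_meet b c : E (nmeet b c) = E b :&: E c.
Proof. by case: e_hom => _ -> _ _. Qed.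
Lemma E_imp b c : E (nimp b c) = imp_set (E b) (E c).
Proof. by case: e_hom => _ _ -> _. Qed.
Lemma E_nuc b : E (nnuc b) = nuc_set (E b).
Proof. by case: e_hom => _ _ _ ->. Qed.
Lemma E_onto (U : {set X}) : is_upset U -> exists b, E b = U.
Proof. by move=> U_up; have [b eb] := e_surj (exist _ U U_up); exists b; rewrite eb. Qed.

(* The generator of the kernel filter of [e]. *)
Definition ker_gen : D := bigmeet [seq b <- enum D | E b == setT].

Lemma E_ker_gen : E ker_gen = setT.
Proof.
rewrite /ker_gen; elim: (enum D) => [|b s IH] /=; first exact: E_top.
by case: ifP => // /eqP Eb; rewrite [bigmeet _]/= E_meet IH setIT.
Qed.

Lemma ker_gen_nle b : E b = setT -> nle ker_gen b.
Proof. by move=> Eb; apply: bigmeet_nle; rewrite mem_filter Eb eqxx mem_enum. Qed.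

(* The points of [Y] in the image of the embedding of [X] dual to [e]. *)
Definition embedded (p : Y) : bool := ~~ nleb ker_gen (val p).

Lemma embedded_nle (p : Y) b : embedded p -> E b \subset E (val p) -> nle b (val p).
Proof.
move=> /negP kp Ebp.
have : nle ker_gen (nimp b (val p)) by apply: ker_gen_nle; rewrite E_imp imp_set_subT.
by move/nle_impP => /(meet_irr_prime (valP p)) [/nlebP // | //].
Qed.

Lemma embedded_up (p q : Y) : embedded p -> ple p q -> embedded q.
Proof. by move=> kp qp; apply: contra kp => kq; apply: nleb_trans kq qp. Qed.

Lemma embedded_E_neq (p : Y) : embedded p -> exists x, x \notin E (val p).
Proof.
move=> /negP kp; have [x xp | all_in] := pickP (fun x => x \notin E (val p)).
  by exists x.
case: kp; apply/nlebP/ker_gen_nle/setP => x; rewrite inE.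
by move: (all_in x) => /= /negbFE.
Qed.

(* Since [p] is prime, [E (val p)] is the complement of a principal downset. *)
Lemma embedded_E_max (p : Y) : embedded p ->
  exists x, (x \notin E (val p)) && [forall y, (y \notin E (val p)) ==> ple y x].
Proof.
move=> kp; have [x0 x0p] := embedded_E_neq kp.
have [x xp xmax] :=
  @ex_maximal X (@ple X) (fun x => x \notin E (val p)) x0 (@ple_trans X) x0p.
exists x; rewrite xp; apply/forallP => y; apply/implyP => yp.
apply/negPn/negP => nyx.
have Vx_up : is_upset (x |: E (val p)).
  apply/upsetP => a b; rewrite !inE => /orP [/eqP -> | ap] ab.
    have [_ | bp] := boolP (b \in E (val p)); first by rewrite orbT.
    by rewrite (ple_anti (xmax b bp ab) ab) eqxx.
  by rewrite (upsetW ap ab) orbT.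
have [u Eu] := E_onto Vx_up; have [v Ev] := E_onto (upset_not_below x).
have : nle (nmeet u v) (val p).
  apply: embedded_nle => //; rewrite E_meet Eu Ev; apply/subsetP => z; rewrite !inE.
  by case/andP => /orP [/eqP -> | //]; rewrite ple_refl.
case/(meet_irr_prime (valP p)) => /E_nle /subsetP sub.
  by move: (sub x); rewrite Eu !inE eqxx => /(_ isT); apply/negP.
by move: (sub y); rewrite Ev !inE nyx => /(_ isT); apply/negP.
Qed.

Definition point_of (p : Y) : option X :=
  if embedded p then
    [pick x | (x \notin E (val p)) && [forall y, (y \notin E (val p)) ==> ple y x]]
  else None.

Lemma point_of_embedded (p : Y) : embedded p -> exists x, point_of p = Some x.
Proof.
move=> kp; rewrite /point_of kp; case: pickP => [x _ | none]; first by exists x.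
by have [x] := embedded_E_max kp; rewrite none.
Qed.

Lemma point_ofP (p : Y) x : point_of p = Some x ->
  [/\ embedded p, x \notin E (val p) & forall y, y \notin E (val p) -> ple y x].
Proof.
rewrite /point_of; case: ifP => // kp; case: pickP => // x' /andP [xp /forallP xmax] [<-].
by split => // y yp; move: (xmax y); rewrite yp.
Qed.

Lemma point_of_nle (p : Y) x b : point_of p = Some x -> nle b (val p) <-> x \notin E b.
Proof.
case/point_ofP => kp xp xmax; split.
  by move=> /E_nle /subsetP bp; apply: contra xp; apply: bp.
move=> xb; apply: embedded_nle => //; apply/subsetP => w wb.
apply/negPn/negP => wp; move/negP: xb; apply.
exact: upsetW wb (xmax w wp).
Qed.

(* The witness is the largest element of [D] whose image misses [x]. *)
Lemma E_not_below_point x : exists p : Y, E (val p) = [set z | ~~ ple z x].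
Proof.
have [v Ev] := E_onto (upset_not_below x).
pose m := nimp ker_gen v.
have Em : E m = [set z | ~~ ple z x].
  by rewrite /m E_imp E_ker_gen Ev imp_setT ?upset_not_below.
have xm : x \notin E m by rewrite Em inE ple_refl.
have m_max c : nle m c -> x \notin E c -> c = m.
  move=> mc xc; apply: nle_anti mc; rewrite /m; apply/nle_impP; rewrite nmeetC.
  apply/nle_impP; apply: ker_gen_nle; rewrite E_imp Ev imp_set_subT //.
  apply/subsetP => w wc; rewrite inE; apply: contra xc => wx.
  exact: upsetW wc wx.
have m_irr : meet_irr m.
  apply: (@meet_irr_maximal _ _ m (fun c => x \in E c)) => //.
    by rewrite E_top inE.
  by move=> b c xb xc; rewrite E_meet inE xb xc.
by exists (exist _ m m_irr).
Qed.

Lemma point_of_onto x : exists p, point_of p = Some x.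
Proof.
have [p Ep] := E_not_below_point x.
have kp : embedded p.
  apply/negP => /nlebP /E_nle; rewrite E_ker_gen Ep => /subsetP /(_ x).
  by rewrite !inE ple_refl => /(_ isT).
have [x' px'] := point_of_embedded kp; exists p; rewrite px'; congr Some.
have [_ x'p x'max] := point_ofP px'; apply: ple_anti.
  by move: x'p; rewrite Ep inE negbK.
by apply: x'max; rewrite Ep inE ple_refl.
Qed.

(* [f] is a partial morphism [Y -> X], defined only inside the upset [K] of
   already treated points, and extending [point_of]. *)
Record extension (K : {set Y}) (f : Y -> option X) : Prop := {
  ext_upset : forall p q, p \in K -> ple p q -> q \in K;
  ext_embedded : forall p, embedded p -> p \in K;
  ext_point_of : forall p, embedded p -> f p = point_of p;
  ext_dom : forall p x, f p = Some x -> p \in K;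
  ext_mono : forall p q x y, ple p q -> f p = Some x -> f q = Some y -> ple x y;
  ext_lift : forall p x y, f p = Some x -> ple x y -> exists2 q, ple p q & f q = Some y;
  ext_S : forall p x, f p = Some x -> (x \in pS X) = (p \in pS Y);
  ext_S_below : forall s x y, s \in K -> s \in pS Y -> ple s x -> f x = Some y ->
    exists s', exists x', [/\ s' \in pS Y, ple s s', ple s' x', f s' != None & f x' = Some y]
}.

Lemma point_of_extension : extension [set p | embedded p] point_of.
Proof.
split.
- by move=> p q; rewrite !inE; apply: embedded_up.
- by move=> p; rewrite inE.
- by [].
- by move=> p x /point_ofP [kp _ _]; rewrite inE.
- move=> p q x y pq px qy.
  case: (point_ofP px) => _ xp _; case: (point_ofP qy) => _ _ ymax.
  by apply: ymax; apply: contra xp; apply/subsetP/E_nle/nlebP.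
- move=> p x y px xy; have [q qy] := point_of_onto y; exists q => //.
  apply/nlebP/(point_of_nle _ px).
  by case: (point_ofP qy) => _ yq _; apply: contra yq => xq; apply: upsetW xq xy.
- move=> p x px; case: (point_ofP px) => kp xp xmax; rewrite inE.
  apply/idP/eqP => [xS | p_fix].
    apply: nle_anti (nle_nuc _); apply/(point_of_nle _ px).
    by rewrite E_nuc; apply: contra xp => /in_nucP; apply => //; apply: ple_refl.
  apply/negPn/negP => xnS.
  have : x \in E (nnuc (val p)).
    rewrite E_nuc; apply/in_nucP => s sS xs; apply/negPn/negP => sp.
    by move: sS; rewrite -(ple_anti xs (xmax s sp)) (negbTE xnS).
  by rewrite p_fix; apply/negP.
- move=> s x y; rewrite inE => ks sS sx xy.
  have [z sz] := point_of_embedded ks.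
  by exists s, x; split => //; [apply: ple_refl | rewrite sz].
Qed.

Section ExtensionStep.
Variables (K : {set Y}) (f : Y -> option X) (p0 : Y).
Hypothesis f_ext : extension K f.
Hypothesis p0_notin : p0 \notin K.
Hypothesis p0_max : forall q, q \notin K -> ple p0 q -> q = p0.

Definition values_above : {set X} := [set x | [exists q, ple p0 q && (f q == Some x)]].
Definition min_values := minset values_above.
Definition needs_cover := (p0 \in pS Y) && ~~ (min_values \subset pS X).
Definition new_value : option X :=
  if needs_cover then [pick c | (c \in pS X) && (imm_succ c == min_values)] else None.
Definition extend_at q := if q == p0 then new_value else f q.

Lemma f_some_neq q x : f q = Some x -> q != p0.
Proof. by move=> /(ext_dom f_ext) qK; apply: contraNneq p0_notin => <-. Qed.

Lemma extend_at_old q : q != p0 -> extend_at q = f q.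
Proof. by rewrite /extend_at => /negbTE ->. Qed.

Lemma extend_at_some q y : extend_at q = Some y ->
  (q = p0 /\ new_value = Some y) \/ (q != p0 /\ f q = Some y).
Proof. by rewrite /extend_at; case: eqP => [-> | /eqP qp0] qy; [left | right]. Qed.

Lemma values_aboveP x : reflect (exists2 q, ple p0 q & f q = Some x) (x \in values_above).
Proof.
rewrite inE; apply: (iffP existsP) => [[q /andP [p0q /eqP fq]] | [q p0q fq]].
  by exists q.
by exists q; rewrite p0q fq eqxx.
Qed.

Lemma values_above_up x y : x \in values_above -> ple x y -> y \in values_above.
Proof.
move=> /values_aboveP [q p0q fq] xy; have [q' qq' fq'] := ext_lift f_ext fq xy.
by apply/values_aboveP; exists q' => //; apply: ple_trans p0q qq'.
Qed.

Lemma new_value_some c : new_value = Some c ->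
  [/\ needs_cover, c \in pS X & imm_succ c = min_values].
Proof.
rewrite /new_value; case: ifP => // nc.
by case: pickP => // c' /andP [c'S /eqP c'cov] [<-].
Qed.

Lemma new_value_none : new_value = None -> ~~ needs_cover.
Proof.
rewrite /new_value; case: ifP => // /andP [_ notS]; case: pickP => // none _.
have [c [cS ccov]] := cover (@minset_antichain X values_above) notS.
by move: (none c); rewrite cS ccov eqxx.
Qed.

Lemma new_value_below c y : new_value = Some c -> y \in values_above -> ple c y.
Proof.
move=> /new_value_some [_ _ ccov] /minset_below [a amin ay].
have : a \in imm_succ c by rewrite ccov.
by move/imm_succ_plt => /andP [_ ca]; apply: ple_trans ca ay.
Qed.

Lemma new_value_above c y : new_value = Some c -> ple c y -> y != c -> y \in values_above.
Proof.
move=> /new_value_some [_ _ ccov] cy yc.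
have : plt c y by rewrite /plt eq_sym yc cy.
case/imm_succ_below => a; rewrite ccov => amin ay.
by apply: values_above_up ay; apply: (subsetP (minset_sub _)).
Qed.

Lemma extend_at_S_below s x y : s \in p0 |: K -> s \in pS Y -> ple s x ->
  extend_at x = Some y ->
  exists s', exists x',
    [/\ s' \in pS Y, ple s s', ple s' x', extend_at s' != None & extend_at x' = Some y].
Proof.
case: f_ext => Kup _ _ fdom _ flift fS fSb.
case/setU1P => [-> | sK] sS sx /extend_at_some [[ex xy] | [nx xy]].
- by exists p0, x; rewrite /extend_at eqxx xy ex eqxx ple_refl.
- case nvE: new_value => [c|].
    by exists p0, x; rewrite /extend_at eqxx nvE (negbTE nx) xy ple_refl.
  have [a amin ay] : exists2 a, a \in min_values & ple a y.
    by apply: minset_below; apply/values_aboveP; exists x.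
  have /values_aboveP [qa p0qa fqa] := subsetP (minset_sub _) a amin.
  have aS : a \in pS X.
    by move: (new_value_none nvE); rewrite /needs_cover sS negbK => /subsetP; apply.
  have qaS : qa \in pS Y by rewrite -(fS _ _ fqa).
  have [x' qax' fx'] := flift _ _ _ fqa ay.
  exists qa, x'; split => //.
    by rewrite extend_at_old ?fqa ?(f_some_neq fqa).
  by rewrite extend_at_old ?(f_some_neq fx').
- by case/negP: p0_notin; rewrite -ex; apply: Kup sK sx.
- have [s' [x'] [s'S ss' s'x' fs' fx']] := fSb _ _ _ sK sS sx xy.
  case fs'E: (f s') fs' => [z|] // _.
  exists s', x'; split => //.
    by rewrite extend_at_old ?fs'E ?(f_some_neq fs'E).
  by rewrite extend_at_old ?(f_some_neq fx').
Qed.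

Lemma extension_step : extension (p0 |: K) extend_at.
Proof.
case: f_ext => Kup Kemb fpt fdom fmono flift fS _.
split; last exact: extend_at_S_below.
- move=> p q; rewrite !inE => /orP [/eqP -> | pK] pq.
    have [_ | qK] := boolP (q \in K); first by rewrite orbT.
    by rewrite (p0_max qK pq) eqxx.
  by rewrite (Kup _ _ pK pq) orbT.
- by move=> p kp; rewrite inE Kemb ?orbT.
- move=> p kp; rewrite extend_at_old ?fpt //.
  by apply: contraNneq p0_notin => <-; apply: Kemb.
- move=> p x /extend_at_some [[-> _] | [_ px]]; first exact: setU11.
  by rewrite inE (fdom _ _ px) orbT.
- move=> p q x y pq /extend_at_some [[ep px] | [np px]] /extend_at_some [[eq qy] | [nq qy]].
  + by move: px; rewrite qy => -[->]; apply: ple_refl.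
  + by apply: new_value_below px _; apply/values_aboveP; exists q; rewrite -?ep.
  + by case/negP: p0_notin; rewrite -eq; apply: Kup (fdom _ _ px) pq.
  + exact: fmono pq px qy.
- move=> p x y /extend_at_some [[-> px] | [np px]] xy.
    have [-> | yx] := eqVneq y x; first by exists p0; rewrite ?ple_refl /extend_at ?eqxx.
    case/values_aboveP: (new_value_above px xy yx) => q p0q fq.
    by exists q; rewrite // extend_at_old // (f_some_neq fq).
  have [q pq fq] := flift _ _ _ px xy.
  by exists q; rewrite // extend_at_old // (f_some_neq fq).
- move=> p x /extend_at_some [[-> px] | [np px]]; last exact: fS.
  by case: (new_value_some px) => /andP [-> _] -> _.
Qed.

End ExtensionStep.

Lemma extension_total K f : extension K f -> exists g, extension setT g.
Proof.
move nK: #|~: K| => n; elim: n K f nK => [|n IH] K f nK f_ext.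
  by exists f; rewrite -[K]setCK (cards0_eq nK) setC0 in f_ext.
have /card_gt0P [q0 q0K] : 0 < #|~: K| by rewrite nK.
rewrite inE in q0K.
have [p0 p0K p0max] :=
  @ex_maximal Y (@ple Y) (fun q => q \notin K) q0 (@ple_trans Y) q0K.
have p0_max q : q \notin K -> ple p0 q -> q = p0.
  by move=> qK pq; apply: ple_anti (p0max q qK pq) pq.
apply: (IH (p0 |: K) (extend_at f p0)); last exact: extension_step.
have : #|~: K| = (p0 \in ~: K) + #|~: (p0 |: K)|.
  by rewrite (cardsD1 p0 (~: K)); congr (_ + _); apply: eq_card => z; rewrite !inE negb_or.
by rewrite nK inE p0K add1n => -[].
Qed.

Lemma E_point_of p x b : point_of p = Some x -> (x \in E b) = (p \in rep_set b).
Proof.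
move=> px; rewrite in_rep_set; apply/idP/idP.
  by move=> xb; apply/negP => /nlebP /(point_of_nle _ px); rewrite xb.
by move=> /negP bp; apply/negPn/negP => /(point_of_nle _ px) /nlebP.
Qed.

Theorem surj_hom_section : exists s : dual_ops X -> D, is_hom s /\ cancel s e.
Proof.
have [f f_ext] := extension_total point_of_extension.
have f_hom : is_hom (pmap_dual f).
  apply: pmap_dual_hom; [exact: ext_mono f_ext | exact: ext_lift f_ext | exact: ext_S f_ext |].
  by move=> s x y sS sx fx; apply: (ext_S_below f_ext) sS sx fx; rewrite inE.
exists (fun U => rep_inv (pmap_dual f U)).
split; first exact: hom_comp f_hom rep_inv_hom.
move=> U; apply: val_inj; apply/setP => x.
have [p px] := point_of_onto x; have [kp _ _] := point_ofP px.
have fp : f p = Some x by rewrite (ext_point_of f_ext kp).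
rewrite (E_point_of _ px) [rep_set _](congr1 val (rep_invK (pmap_dual f U))).
apply/pmap_setP/idP => [H | xU q z pq fq]; first exact: H (ple_refl _) fp.
exact: upsetW xU (ext_mono f_ext pq fp fq).
Qed.

End SurjectionSection.

Section Pullback.
Context {B C : nis_ops} {HB : is_nis B} {HC : is_nis C}.
Variables (X : SPoset) (e : B -> C) (g : dual_ops X -> C).
Hypotheses (e_hom : is_hom e) (g_hom : is_hom g).

Definition pullback_car := {bu : (B * dual_ops X)%type | e bu.1 == g bu.2}.

Lemma pullback_top : e (ntop B) == g (ntop (dual_ops X)).
Proof. by case: e_hom => -> _ _ _; case: g_hom => -> _ _ _. Qed.

Lemma pullback_meet (x y : pullback_car) :
  e (nmeet (val x).1 (val y).1) == g (nmeet (val x).2 (val y).2).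
Proof.
by case: e_hom => _ -> _ _; case: g_hom => _ -> _ _; rewrite (eqP (valP x)) (eqP (valP y)).
Qed.

Lemma pullback_imp (x y : pullback_car) :
  e (nimp (val x).1 (val y).1) == g (nimp (val x).2 (val y).2).
Proof.
by case: e_hom => _ _ -> _; case: g_hom => _ _ -> _; rewrite (eqP (valP x)) (eqP (valP y)).
Qed.

Lemma pullback_nuc (x : pullback_car) : e (nnuc (val x).1) == g (nnuc (val x).2).
Proof. by case: e_hom => _ _ _ ->; case: g_hom => _ _ _ ->; rewrite (eqP (valP x)). Qed.

Definition pullback : nis_ops :=
  @NisOps pullback_car
    (exist _ (ntop B, ntop (dual_ops X)) pullback_top)
    (fun x y => exist _ (nmeet (val x).1 (val y).1, nmeet (val x).2 (val y).2) (pullback_meet x y))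
    (fun x y => exist _ (nimp (val x).1 (val y).1, nimp (val x).2 (val y).2) (pullback_imp x y))
    (fun x => exist _ (nnuc (val x).1, nnuc (val x).2) (pullback_nuc x)).

Lemma pullback_nle (x y : pullback) :
  nle x y <-> nle (val x).1 (val y).1 /\ nle (val x).2 (val y).2.
Proof.
case: x => [[a u] pa]; case: y => [[b v] pb]; rewrite /nle /=; split.
  by move/(congr1 val) => /= [-> ->].
by case=> ab uv; apply: val_inj => /=; rewrite ab uv.
Qed.

Lemma pullback_is_nis : is_nis pullback.
Proof.
have pair_eq (x y : pullback) : (val x).1 = (val y).1 -> (val x).2 = (val y).2 -> x = y.
  by case: x => [[a u] ?]; case: y => [[b v] ?] /= ab uv; apply: val_inj; rewrite /= ab uv.
split; first by move=> x y z; apply: pair_eq; apply: nmeetA.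
split; first by move=> x y; apply: pair_eq; apply: nmeetC.
split; first by move=> x; apply: pair_eq; apply: nmeetxx.
split; first by move=> x; apply: pair_eq; apply: nmeetxT.
split.
  move=> x y z; split => /pullback_nle /= [h1 h2]; apply/pullback_nle => /=.
    by split; apply/nle_impP.
  by split; apply/nle_impP.
split; first by move=> x; apply/pullback_nle; split; apply: nle_nuc.
split; first by move=> x y; apply: pair_eq; apply: nnucI.
by move=> x; apply/pullback_nle; split; apply: nle_nnuc_idem.
Qed.

Definition pullback_fst (x : pullback) : B := (val x).1.
Definition pullback_snd (x : pullback) : dual_ops X := (val x).2.

Lemma pullback_fst_hom : is_hom pullback_fst.
Proof. by []. Qed.
Lemma pullback_snd_hom : is_hom pullback_snd.
Proof. by []. Qed.

Lemma pullback_snd_onto : (forall c, exists b, e b = c) -> forall U, exists x, pullback_snd x = U.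
Proof.
move=> e_onto U; have [b eb] := e_onto (g U).
have p : e (b, U).1 == g (b, U).2 by rewrite /= eb.
by exists (exist _ (b, U) p).
Qed.

End Pullback.

Theorem projective_of_covers (X : SPoset) :
  (forall a : {set X}, antichain a -> ~~ (a \subset pS X) -> has_cover a) ->
  projective (dual_ops X).
Proof.
move=> cover B C HB HC e g e_hom e_onto g_hom.
have HP := pullback_is_nis (HB := HB) e_hom g_hom.
have [s [s_hom sK]] := @surj_hom_section _ HP X _ (pullback_snd_hom e_hom g_hom)
  (pullback_snd_onto e_hom g_hom e_onto) cover.
exists (fun U => pullback_fst (s U)); split.
  exact: hom_comp s_hom (pullback_fst_hom e_hom g_hom).
by move=> U; have /eqP := valP (s U); rewrite -/(pullback_snd (s U)) sK.
Qed.

Section AdjoinPoint.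
Variables (X : SPoset) (a : {set X}).

Definition upset_of : {set X} := [set y | [exists x in a, ple x y]].

Lemma upset_ofW x y : x \in upset_of -> ple x y -> y \in upset_of.
Proof.
rewrite !inE => /existsP [z /andP [za zx]] xy.
by apply/existsP; exists z; rewrite za (ple_trans zx xy).
Qed.

Lemma upset_of_upset : is_upset upset_of.
Proof. by apply/upsetP; apply: upset_ofW. Qed.

Lemma mem_upset_of x : x \in a -> x \in upset_of.
Proof. by move=> xa; rewrite inE; apply/existsP; exists x; rewrite xa ple_refl. Qed.

(* [None] is the adjoined point. *)
Definition adjoin_le (o1 o2 : option X) : bool :=
  match o1, o2 with
  | Some x, Some y => ple x y
  | None, Some y => y \in upset_of
  | None, None => true
  | Some _, None => false
  end.

Lemma adjoin_le_refl o : adjoin_le o o.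
Proof. by case: o => //= x; apply: ple_refl. Qed.

Lemma adjoin_le_anti o1 o2 : adjoin_le o1 o2 -> adjoin_le o2 o1 -> o1 = o2.
Proof. by case: o1 => [x|]; case: o2 => [y|] //= xy yx; rewrite (ple_anti xy yx). Qed.

Lemma adjoin_le_trans o1 o2 o3 : adjoin_le o1 o2 -> adjoin_le o2 o3 -> adjoin_le o1 o3.
Proof.
by case: o1 => [x|]; case: o2 => [y|]; case: o3 => [z|] //=; [apply: ple_trans | apply: upset_ofW].
Qed.

Definition adjoin : SPoset :=
  @MkSPoset (option X) adjoin_le adjoin_le_refl adjoin_le_anti adjoin_le_trans
    [set o | if o is Some x then x \in pS X else true].

Definition restrict_set (U : {set adjoin}) : {set X} := [set x | Some x \in U].

Lemma restrict_set_upset (U : dual_ops adjoin) : is_upset (restrict_set (val U)).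
Proof. by apply/upsetP => x y; rewrite !inE => xU xy; apply: upsetW xU _. Qed.

Definition restrict (U : dual_ops adjoin) : dual_ops X :=
  exist _ (restrict_set (val U)) (restrict_set_upset U).

Lemma restrict_hom : is_hom restrict.
Proof.
split.
- by apply: val_inj; apply/setP => x; rewrite !inE.
- by move=> U V; apply: val_inj; apply/setP => x; rewrite !inE.
- move=> U V; apply: val_inj; apply/setP => x /=; rewrite [in LHS]inE.
  apply/(@in_impP adjoin)/(@in_impP X) => H.
    by move=> y xy; rewrite !inE; apply: H.
  by move=> [y|] //= xy; have := H y xy; rewrite !inE.
- move=> U; apply: val_inj; apply/setP => x /=; rewrite [in LHS]inE.
  apply/(@in_nucP adjoin)/(@in_nucP X) => H.
    by move=> s sS xs; rewrite inE; apply: H => //; rewrite inE.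
  by move=> [s|] //=; rewrite inE => sS xs; have := H s sS xs; rewrite inE.
Qed.

Lemma restrict_onto U : exists V, restrict V = U.
Proof.
have V_up : is_upset [set o : adjoin | if o is Some x then x \in val U else false].
  by apply/upsetP => [[x|] [y|]] //; rewrite !inE //= => xU xy; apply: upsetW xU xy.
by exists (exist (@is_upset adjoin) _ V_up); apply: val_inj; apply/setP => x; rewrite !inE.
Qed.

End AdjoinPoint.

Section CoverFromSection.
Variables (X : SPoset) (a : {set X}).
Hypothesis a_antichain : antichain a.
Hypothesis a_notS : ~~ (a \subset pS X).
Variable h : dual_ops X -> dual_ops (adjoin a).
Hypothesis h_hom : is_hom h.
Hypothesis hK : cancel h (@restrict X a).

Local Notation up := (upset_of a).

Definition up_elt : dual_ops X := exist _ up (upset_of_upset a).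

Definition marked (U : dual_ops X) : bool := (None : adjoin a) \in val (h U).

Lemma mem_h U x : (Some x \in val (h U)) = (x \in val U).
Proof. by have /setP /(_ x) := congr1 val (hK U); rewrite inE. Qed.

Lemma marked_top : marked (ntop (dual_ops X)).
Proof. by case: h_hom => hT _ _ _; rewrite /marked hT inE. Qed.

Lemma marked_meet U V : marked (nmeet U V) = marked U && marked V.
Proof. by case: h_hom => _ hI _ _; rewrite /marked hI inE. Qed.

Lemma marked_impP U V :
  marked (nimp U V) <-> (marked U -> marked V) /\ {in up, forall x, x \in val U -> x \in val V}.
Proof.
case: h_hom => _ _ himp _; rewrite /marked himp; split.
  move/(@in_impP (adjoin a)) => H; split; first exact: H.
  by move=> x xu xU; have := H (Some x) xu; rewrite !mem_h => /(_ xU).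
case=> HN HS; apply/(@in_impP (adjoin a)) => -[y|] /= uy; last exact: HN.
by rewrite !mem_h; apply: HS.
Qed.

Lemma marked_nuc U :
  marked (nnuc U) -> marked U /\ forall x, x \in pS X -> x \in up -> x \in val U.
Proof.
case: h_hom => _ _ _ hnuc; rewrite /marked hnuc => /(@in_nucP (adjoin a)) H.
split; first by apply: H => //; rewrite inE.
by move=> x xS xu; have := H (Some x); rewrite !inE mem_h => /(_ xS xu).
Qed.

Lemma marked_mono (U V : dual_ops X) : val U \subset val V -> marked U -> marked V.
Proof.
move=> UV mU; have UVU : U = nmeet U V by apply: val_inj => /=; apply/esym/setIidPl.
by move: mU; rewrite UVU marked_meet => /andP [].
Qed.

Lemma marked_up_sub V : marked V -> up \subset val V.
Proof.
move=> mV; have TV : nimp (ntop (dual_ops X)) V = V.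
  by apply: val_inj; apply: imp_setT (valP V).
have /marked_impP [_ HS] : marked (nimp (ntop (dual_ops X)) V) by rewrite TV.
by apply/subsetP => x xu; apply: (HS x xu); rewrite inE.
Qed.

(* Were [up] marked, so would be the upset generated by [pS X :&: up]; but an
   element of [a] outside [pS X] is not in that upset, since [a] is an antichain. *)
Lemma up_not_marked : ~~ marked up_elt.
Proof.
apply/negP => m_up.
have U0_up : is_upset [set x | [exists s in pS X, (s \in up) && ple s x]].
  apply/upsetP => x y; rewrite !inE => /existsP [s /andP [sS /andP [su sx]]] xy.
  by apply/existsP; exists s; rewrite sS su (ple_trans sx xy).
pose U0 : dual_ops X := exist (@is_upset X) _ U0_up.
have /marked_nuc [/marked_up_sub /subsetP U0_sub _] : marked (nnuc U0).
  apply: marked_mono m_up; apply/subsetP => x xu; apply/(@in_nucP X) => s sS xs.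
  by rewrite inE; apply/existsP; exists s; rewrite sS ple_refl (upset_ofW xu xs).
have [x xa xnS] := subsetPn a_notS.
move: (U0_sub x (mem_upset_of xa)); rewrite inE => /existsP [s /andP [sS /andP [su sx]]].
move: su; rewrite inE => /existsP [y /andP [ya ys]].
have yx : y = x by apply: a_antichain => //; apply: ple_trans ys sx.
by move: sS; rewrite yx in ys; rewrite -(ple_anti ys sx) (negbTE xnS).
Qed.

Definition least_marked : dual_ops X :=
  [arg min_(U < ntop (dual_ops X) | marked U) #|val U|].

Lemma least_marked_marked : marked least_marked.
Proof. by rewrite /least_marked; case: arg_minnP => //; apply: marked_top. Qed.

Lemma least_marked_sub U : marked U -> val least_marked \subset val U.
Proof.
rewrite /least_marked; case: arg_minnP; first exact: marked_top.
move=> G mG Gmin mU; apply/setIidPl/eqP.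
have GU_marked : marked (nmeet G U) by rewrite marked_meet mG mU.
by rewrite eqEcard subsetIl (Gmin _ GU_marked).
Qed.

Lemma least_marked_above x :
  x \in val least_marked -> x \notin up -> val least_marked \subset [set y | ple x y].
Proof.
move=> xG xnu; pose Ux : dual_ops X := exist (@is_upset X) _ (upset_above x).
have [mx | nmx] := boolP (marked Ux); first exact: least_marked_sub mx.
have : marked (nimp Ux up_elt).
  by apply/marked_impP; split => [mx | //]; rewrite mx in nmx.
move=> /least_marked_sub /subsetP /(_ x xG) /(@in_impP X) /(_ x (ple_refl _)).
by rewrite !inE ple_refl => /(_ isT) xu; rewrite inE xu in xnu.
Qed.

Lemma least_marked_not_up : exists2 c, c \in val least_marked & c \notin up.
Proof.
have [Gup | /subsetPn [c cG cnu]] := boolP (val least_marked \subset up); last by exists c.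
have Gupe : least_marked = up_elt.
  by apply: val_inj; apply/eqP; rewrite eqEsubset Gup marked_up_sub ?least_marked_marked.
by move: up_not_marked; rewrite -Gupe least_marked_marked.
Qed.

Section LeastMarkedPoint.
Variable c : X.
Hypotheses (cG : c \in val least_marked) (c_notup : c \notin up).

Lemma least_point_below y : y \in up -> ple c y.
Proof.
move=> yu; have /subsetP := least_marked_above cG c_notup.
by move=> /(_ y (subsetP (marked_up_sub least_marked_marked) y yu)); rewrite inE.
Qed.

Lemma above_least_point y : ple c y -> y = c \/ y \in up.
Proof.
move=> cy; have [yu | ynu] := boolP (y \in up); [by right | left].
have yG : y \in val least_marked by apply: upsetW cG cy.
have /subsetP /(_ c cG) := least_marked_above yG ynu.
by rewrite inE => yc; apply: ple_anti.
Qed.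

(* Otherwise [least_marked] would be contained in [nnuc up_elt]. *)
Lemma least_point_S : c \in pS X.
Proof.
apply/negPn/negP => cnS.
have : marked (nnuc up_elt).
  apply: marked_mono least_marked_marked; apply/subsetP => y yG.
  apply/(@in_nucP X) => s sS ys.
  have /subsetP /(_ y yG) := least_marked_above cG c_notup; rewrite inE => cy.
  have [sc | //] := above_least_point (ple_trans cy ys).
  by move: cnS; rewrite -sc sS.
by case/marked_nuc => m_up _; move: up_not_marked; rewrite m_up.
Qed.

Lemma imm_succ_least_point : imm_succ c = a.
Proof.
apply/setP => y; rewrite inE; apply/idP/idP.
  case/andP => /andP [ncy cy] /existsPn no_between.
  have [yc | ] := above_least_point cy; first by rewrite yc eqxx in ncy.
  rewrite inE => /existsP [x /andP [xa xy]].
  have [<- // | nxy] := eqVneq x y.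
  have cx : plt c x.
    rewrite /plt least_point_below ?mem_upset_of // andbT.
    by apply: contraNneq c_notup => ->; apply: mem_upset_of.
  by move: (no_between x); rewrite cx /plt nxy xy.
move=> ya; have yu := mem_upset_of ya.
rewrite /plt least_point_below // andbT; apply/andP; split.
  by apply: contraNneq c_notup => ->.
apply/existsPn => z; apply/negP => /andP [/andP [ncz cz] /andP [nzy zy]].
have [zc | ] := above_least_point cz; first by rewrite zc eqxx in ncz.
rewrite inE => /existsP [x /andP [xa xz]].
have xy : x = y by apply: a_antichain => //; apply: ple_trans xz zy.
by rewrite xy in xz; rewrite (ple_anti zy xz) eqxx in nzy.
Qed.

End LeastMarkedPoint.

Lemma cover_of_section : has_cover a.
Proof.
have [c cG cnu] := least_marked_not_up.
by exists c; split; [apply: least_point_S cG cnu | apply: imm_succ_least_point].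
Qed.

End CoverFromSection.

Theorem covers_of_projective (X : SPoset) : projective (dual_ops X) ->
  forall a : {set X}, antichain a -> ~~ (a \subset pS X) -> has_cover a.
Proof.
move=> X_proj a a_anti a_notS.
have [h [h_hom hK]] := X_proj _ _ (dual_is_nis (adjoin a)) (dual_is_nis X) _ id
  (restrict_hom a) (@restrict_onto X a) (hom_id (dual_ops X)).
exact: (cover_of_section a_anti a_notS h_hom hK).
Qed.

Theorem mainTheorem14 (P : SPoset) :
  projective (dual_ops P) <->
  (forall a : {set P}, antichain a -> ~~ (a \subset pS P) -> has_cover a).
Proof. by split; [apply: covers_of_projective | apply: projective_of_covers]. Qed.
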